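(* Let $G=(m,n,\boldsymbol{c},\boldsymbol{d},r_{\max},r_{\min})$ be an interbank lending game with strategy space $\boldsymbol{S}$, and let $$\Phi(\boldsymbol{s})=\sum_{j\in B}\sum_{i\in L}\bigl(r_j(\boldsymbol{s},i)-r_{\min}\bigr)s_{ij},\qquad r_j(\boldsymbol{s},z)=(r_{\min}-r_{\max})\frac{\sum_{i=1}^{z}s_{ij}}{d_j}+r_{\max}.$$ Then $\Phi$ is strictly concave over $\boldsymbol{S}$.
   Context: An interbank lending game $G=(m,n,\boldsymbol{c},\boldsymbol{d},r_{\max},r_{\min})$ consists of positive integers $m,n$, budgets $\boldsymbol{c}\in\mathbb{R}_{>0}^m$, demands $\boldsymbol{d}\in\mathbb{R}_{>0}^n$ and reals $0<r_{\min}<r_{\max}$. Lenders are $L=\{1,\dots,m\}$, borrowers $B=\{1,\dots,n\}$. Lender $i$'s strategy set is $S_i=\{s_i\in\mathbb{R}_{\ge0}^n:\sum_{j\in B}s_{ij}\le c_i\}$ and the strategy space is $\boldsymbol{S}=\prod_{i\in L}S_i$, whose elements are $\boldsymbol{s}=(s_{ij})_{i\in L,j\in B}$. *)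

(* Lenders 1..m are 'I_m, borrowers 1..n are 'I_n;
   a strategy profile s = (s_ij) is an m x n matrix over the reals. *)
From HB Require Import structures.
From mathcomp Require Import all_boot all_order all_algebra.
Set Implicit Arguments. Unset Strict Implicit. Unset Printing Implicit Defensive.
Import Order.TTheory GRing.Theory Num.Theory.
Local Open Scope ring_scope.

Definition strategy_space (R : realFieldType) (m n : nat) (c : 'I_m -> R)
  (s : 'M[R]_(m, n)) : Prop :=
  (forall (i : 'I_m) (j : 'I_n), 0 <= s i j) /\
  (forall i : 'I_m, \sum_(j < n) s i j <= c i).

Definition rate (R : realFieldType) (m n : nat) (d : 'I_n -> R) (rmax rmin : R)
  (s : 'M[R]_(m, n)) (j : 'I_n) (z : 'I_m) : R :=
  (rmin - rmax) * ((\sum_(i < m | (i <= z)%N) s i j) / d j) + rmax.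

Definition Phi (R : realFieldType) (m n : nat) (d : 'I_n -> R) (rmax rmin : R)
  (s : 'M[R]_(m, n)) : R :=
  \sum_(j < n) \sum_(i < m) (rate d rmax rmin s j i - rmin) * s i j.

Definition strictly_concave_on (R : realFieldType) (m n : nat)
  (A : 'M[R]_(m, n) -> Prop) (f : 'M[R]_(m, n) -> R) : Prop :=
  forall (s t : 'M[R]_(m, n)) (l : R), A s -> A t -> s <> t -> 0 < l -> l < 1 ->
    l * f s + (1 - l) * f t < f (l *: s + (1 - l) *: t).

(* Column by column, Phi is affine minus (r_max - r_min) / d_j times the
   quadratic form Q(v) = sum_i (sum_(k <= i) v_k) v_i, and
   2 Q(v) = (sum_i v_i)^2 + sum_i v_i^2 is positive definite.  Every quadratic
   form satisfies Q(l x + (1 - l) y) = l Q(x) + (1 - l) Q(y) - l (1 - l) Q(x - y),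
   so the concavity gap of Phi at s, t is
   l (1 - l) sum_j (r_max - r_min) / d_j Q(s_.j - t_.j), positive when s <> t. *)

From mathcomp Require Import all_boot all_order all_algebra.
From mathcomp Require Import ring.
Set Implicit Arguments. Unset Strict Implicit. Unset Printing Implicit Defensive.
Import Order.TTheory GRing.Theory Num.Theory.
Local Open Scope ring_scope.

Section PrefixQuad.
Variables (R : realFieldType) (m : nat).

Definition prefix_quad (v : 'I_m -> R) : R :=
  \sum_(i < m) (\sum_(k < m | (k <= i)%N) v k) * v i.

Lemma le_indicator_sym (k i : 'I_m) :
  ((k <= i)%N)%:R + ((i <= k)%N)%:R = 1 + (k == i)%:R :> R.
Proof.
case: (ltngtP k i) => [lt_ki | lt_ik | /val_inj ->]; last by rewrite eqxx.
- by rewrite -val_eqE /= ltn_eqF // addr0.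
- by rewrite -val_eqE /= gtn_eqF // add0r addr0.
Qed.

Lemma prefix_quad_double (v : 'I_m -> R) :
  prefix_quad v *+ 2 = (\sum_(i < m) v i) ^+ 2 + \sum_(i < m) v i ^+ 2.
Proof.
pose pairs (P : 'I_m -> 'I_m -> bool) :=
  \sum_(i < m) \sum_(k < m) (P k i)%:R * (v k * v i).
have pairsD P Q : pairs P + pairs Q =
    \sum_(i < m) \sum_(k < m) ((P k i)%:R + (Q k i)%:R) * (v k * v i).
  rewrite /pairs -big_split; apply: eq_bigr => i _.
  by rewrite -big_split; apply: eq_bigr => k _; rewrite mulrDl.
have quad_lower : prefix_quad v = pairs (fun k i => (k <= i)%N).
  apply: eq_bigr => i _; rewrite mulr_suml big_mkcond; apply: eq_bigr => k _.
  by case: ifP; rewrite ?mul1r ?mul0r.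
have quad_upper : prefix_quad v = pairs (fun k i => (i <= k)%N).
  rewrite quad_lower /pairs exchange_big; apply: eq_bigr => i _.
  by apply: eq_bigr => k _; rewrite [v _ * _]mulrC.
have sqr_sum : (\sum_(i < m) v i) ^+ 2 = pairs (fun _ _ => true).
  rewrite expr2 mulr_suml; apply: eq_bigr => i _; rewrite mulr_sumr.
  by apply: eq_bigr => k _; rewrite mul1r mulrC.
have sum_sqr : \sum_(i < m) v i ^+ 2 = pairs (fun k i => k == i).
  apply: eq_bigr => i _; rewrite (bigD1 i) //= eqxx mul1r big1 ?addr0 ?expr2 // => k.
  by move=> /negbTE ->; rewrite mul0r.
rewrite mulr2n {1}quad_lower quad_upper sqr_sum sum_sqr !pairsD.
by apply: eq_bigr => i _; apply: eq_bigr => k _; rewrite le_indicator_sym.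
Qed.

Lemma prefix_quad_ge0 (v : 'I_m -> R) : 0 <= prefix_quad v.
Proof.
rewrite -(pmulrn_lge0 _ (ltn0Sn 1)) prefix_quad_double.
by rewrite addr_ge0 ?sqr_ge0 // sumr_ge0 // => i _; rewrite sqr_ge0.
Qed.

Lemma prefix_quad_gt0 (v : 'I_m -> R) (i0 : 'I_m) : v i0 != 0 -> 0 < prefix_quad v.
Proof.
move=> v_i0_neq0; rewrite -(pmulrn_lgt0 _ (ltn0Sn 1)) prefix_quad_double.
rewrite [X in _ + X](bigD1 i0) //=; apply: ltr_wpDl; first exact: sqr_ge0.
apply: ltr_pwDl; first by rewrite exprn_even_gt0.
by rewrite sumr_ge0 // => i _; rewrite sqr_ge0.
Qed.

Lemma eq_prefix_quad (v w : 'I_m -> R) : v =1 w -> prefix_quad v = prefix_quad w.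
Proof.
by move=> vw; apply: eq_bigr => i _; rewrite vw; congr (_ * _); apply: eq_bigr.
Qed.

Lemma prefix_quad_convex_comb (x y : 'I_m -> R) (l : R) :
  prefix_quad (fun i => l * x i + (1 - l) * y i) =
  l * prefix_quad x + (1 - l) * prefix_quad y
    - l * (1 - l) * prefix_quad (fun i => x i - y i).
Proof.
rewrite /prefix_quad !mulr_sumr -!big_split -sumrB; apply: eq_bigr => i _ /=.
by rewrite big_split sumrB -!mulr_sumr /=; ring.
Qed.

End PrefixQuad.

Lemma sum_prefix_quad_cols_gt0 (R : realFieldType) (m n : nat) (w : 'I_n -> R)
    (D : 'M[R]_(m, n)) :
  (forall j, 0 < w j) -> D != 0 -> 0 < \sum_(j < n) w j * prefix_quad (fun i => D i j).
Proof.
move=> w_gt0 D_neq0.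
have /existsP [i0 /existsP [j0 Dij_neq0]] : [exists i, exists j, D i j != 0].
  apply: contraR D_neq0 => /existsPn D0; apply/eqP/matrixP => i j.
  by move/existsPn/(_ j)/negPn/eqP: (D0 i) => ->; rewrite mxE.
rewrite (bigD1 j0) //=; apply: ltr_pwDl.
  by rewrite mulr_gt0 // (@prefix_quad_gt0 _ _ (fun i => D i j0) i0).
by rewrite sumr_ge0 // => j _; rewrite mulr_ge0 ?prefix_quad_ge0 ?ltW.
Qed.

Section InterbankPotential.
Variables (R : realFieldType) (m n : nat) (d : 'I_n -> R) (rmax rmin : R).

Lemma Phi_prefix_quad (s : 'M[R]_(m, n)) :
  Phi d rmax rmin s = \sum_(j < n)
    (rmax - rmin) * (\sum_(i < m) s i j - (d j)^-1 * prefix_quad (fun i => s i j)).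
Proof.
apply: eq_bigr => j _; rewrite /prefix_quad mulr_sumr -sumrB mulr_sumr.
by apply: eq_bigr => i _; rewrite /rate; ring.
Qed.

Lemma Phi_convex_comb (s t : 'M[R]_(m, n)) (l : R) :
  Phi d rmax rmin (l *: s + (1 - l) *: t) =
  l * Phi d rmax rmin s + (1 - l) * Phi d rmax rmin t
    + l * (1 - l) * \sum_(j < n) (rmax - rmin) / d j * prefix_quad (fun i => s i j - t i j).
Proof.
rewrite !Phi_prefix_quad !mulr_sumr -!big_split; apply: eq_bigr => j _ /=.
rewrite (@eq_prefix_quad _ _ _ (fun i => l * s i j + (1 - l) * t i j)); last first.
  by move=> i; rewrite !mxE.
rewrite prefix_quad_convex_comb.
have -> : \sum_(i < m) (l *: s + (1 - l) *: t) i j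
          = l * \sum_(i < m) s i j + (1 - l) * \sum_(i < m) t i j.
  by rewrite !mulr_sumr -big_split; apply: eq_bigr => i _; rewrite !mxE.
ring.
Qed.

End InterbankPotential.

Theorem lemma3p2 (R : realFieldType) (m n : nat) (c : 'I_m -> R) (d : 'I_n -> R)
  (rmax rmin : R) (hm : (0 < m)%N) (hn : (0 < n)%N)
  (hc : forall i, 0 < c i) (hd : forall j, 0 < d j)
  (hrmin : 0 < rmin) (hr : rmin < rmax) :
  strictly_concave_on (strategy_space c) (Phi d rmax rmin).
Proof.
move=> s t l _ _ s_neq_t l_gt0 l_lt1.
rewrite Phi_convex_comb ltrDl; apply: mulr_gt0; first by rewrite mulr_gt0 ?subr_gt0.
have -> : \sum_(j < n) (rmax - rmin) / d j * prefix_quad (fun i => s i j - t i j)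
        = \sum_(j < n) (rmax - rmin) / d j * prefix_quad (fun i => (s - t) i j).
  apply: eq_bigr => j _; congr (_ * _).
  by apply: eq_prefix_quad => i; rewrite !mxE.
apply: sum_prefix_quad_cols_gt0 => [j|].
  by rewrite divr_gt0 ?subr_gt0.
by rewrite subr_eq0; apply/eqP.
Qed.
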